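(* Let $k\ge2$, $\eta\in[0,1)$ and $c>0$. The equation $(1-\zeta)\,x_k^\ast(c,\zeta)^k\,c^{-k}=\eta$ has a unique solution $\zeta\in[0,1]$. Moreover, if $c<\overline c_k(\eta)$ then this solution satisfies $(k-1)\zeta c^{k-1}<e$.
   Context: $W$ is the Lambert $W$ function; $x_k^\ast(c,\zeta)=\left(\frac{W((k-1)c^{k-1}\zeta)}{(k-1)\zeta}\right)^{\frac1{k-1}}$ for $\zeta\in(0,1]$ and $x_k^\ast(c,0)=c$. $\eta_k^\ast=e^{-k/(k-1)}$; $\overline c_k(\eta)=\left(\frac{e}{(k-1)(1-\eta/\eta_k^\ast)}\right)^{\frac1{k-1}}$ if $\eta<\eta_k^\ast$ and $+\infty$ otherwise. *)

From Stdlib Require Import Reals ClassicalEpsilon.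
From Coquelicot Require Import Rbar.
Open Scope R_scope.

(* Principal branch of the Lambert W function on [0, +oo):
   W x is the unique w >= 0 with w * exp w = x (for x >= 0). Only
   nonnegative arguments are used below. *)
Definition LambertW (x : R) : R :=
  epsilon (inhabits 0%R) (fun w => 0 <= w /\ w * exp w = x).

Definition xstar (k : nat) (c zeta : R) : R :=
  if Req_EM_T zeta 0 then c
  else Rpower (LambertW (INR (k - 1) * c ^ (k - 1) * zeta) / (INR (k - 1) * zeta))
              (/ INR (k - 1)).

Definition etastar (k : nat) : R := exp (- (INR k / INR (k - 1))).

Definition cbar (k : nat) (eta : R) : Rbar :=
  if Rlt_dec eta (etastar k) then
    Finite (Rpower (exp 1 / (INR (k - 1) * (1 - eta / etastar k))) (/ INR (k - 1)))
  else p_infty.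

(* Write n = k - 1, M = n c^n and w = W(M zeta). Then xstar k c zeta = c e^(-w/n),
   so the left-hand side of the equation is
     R(w) = (1 - w e^w / M) e^(-k w / n),
   and zeta = w e^w / M identifies [0, 1] with [0, W(M)]. On that interval R
   decreases strictly from 1 to 0, which gives existence and uniqueness.
   Finally (k-1) zeta c^(k-1) = w e^w, which is < e exactly when w < 1. If w >= 1
   then R(w) <= (1 - zeta) etastar k, which is impossible when eta >= etastar k;
   when eta < etastar k, the bound c < cbar k eta means M (1 - eta / etastar k) < e,
   which forces zeta > 1 - eta / etastar k and again R(w) < eta. *)

From Stdlib Require Import Reals Lra Lia ClassicalEpsilon.
From Coquelicot Require Import Rbar.
Open Scope R_scope.

Lemma exp_pow (x : R) (n : nat) : exp x ^ n = exp (INR n * x).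
Proof.
  induction n as [|n IH].
  - simpl. rewrite Rmult_0_l, exp_0. reflexivity.
  - rewrite <- tech_pow_Rmult, IH, <- exp_plus, S_INR. f_equal. ring.
Qed.

Lemma mul_exp_lt (a b : R) : 0 <= a -> a < b -> a * exp a < b * exp b.
Proof.
  intros Ha Hab.
  pose proof (exp_increasing _ _ Hab). pose proof (exp_pos a).
  nra.
Qed.

Lemma mul_exp_le (a b : R) : 0 <= a -> a <= b -> a * exp a <= b * exp b.
Proof.
  intros Ha [Hab | <-]; [left; apply mul_exp_lt|]; lra.
Qed.

Lemma mul_exp_nonneg (w : R) : 0 <= w -> 0 <= w * exp w.
Proof. intros Hw. pose proof (exp_pos w). nra. Qed.

Lemma LambertW_spec (a : R) :
  0 <= a -> 0 <= LambertW a /\ LambertW a * exp (LambertW a) = a.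
Proof.
  intros Ha. unfold LambertW. apply epsilon_spec.
  destruct (IVT_cor (fun w => w * exp w - a) 0 a) as [w [[Hw0 _] Hw]].
  - reg.
  - exact Ha.
  - pose proof (exp_ineq1_le a). pose proof (exp_pos a). nra.
  - exists w. simpl in Hw. split; lra.
Qed.

Lemma LambertW_mul_exp (w : R) : 0 <= w -> LambertW (w * exp w) = w.
Proof.
  intros Hw.
  destruct (LambertW_spec _ (mul_exp_nonneg w Hw)) as [H0 Heq].
  destruct (Rtotal_order (LambertW (w * exp w)) w) as [Hlt | [-> | Hlt]].
  - pose proof (mul_exp_lt _ _ H0 Hlt). lra.
  - reflexivity.
  - pose proof (mul_exp_lt _ _ Hw Hlt). lra.
Qed.

Section Residual.

Variables (n : nat) (c : R).
Hypothesis hn : (1 <= n)%nat.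
Hypothesis hc : 0 < c.

Definition scale : R := INR n * c ^ n.

(* The left-hand side of the equation, as a function of w = W(scale * zeta). *)
Definition residual (w : R) : R :=
  (1 - w * exp w / scale) * exp (- (INR (S n) / INR n * w)).

Lemma INR_n_pos : 0 < INR n.
Proof. apply lt_0_INR. lia. Qed.

Lemma exponent_pos : 0 < INR (S n) / INR n.
Proof. apply Rdiv_lt_0_compat; [apply lt_0_INR; lia | exact INR_n_pos]. Qed.

Lemma scale_pos : 0 < scale.
Proof.
  unfold scale. pose proof INR_n_pos. pose proof (pow_lt c n hc). nra.
Qed.

Lemma div_scale_le_1 (x : R) : x <= scale -> x / scale <= 1.
Proof.
  intros Hx. pose proof scale_pos.
  apply Rmult_le_reg_r with scale; [lra|].
  unfold Rdiv. rewrite Rmult_assoc, Rinv_l; lra.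
Qed.

Lemma residual_continuous : continuity residual.
Proof. unfold residual. reg. Qed.

Lemma residual_0 : residual 0 = 1.
Proof.
  pose proof scale_pos. unfold residual.
  rewrite Rmult_0_r, Ropp_0, exp_0. field. lra.
Qed.

Lemma residual_scale : residual (LambertW scale) = 0.
Proof.
  pose proof scale_pos.
  destruct (LambertW_spec scale) as [_ HW]; [lra|].
  unfold residual. rewrite HW. unfold Rdiv at 1. rewrite Rinv_r by lra. ring.
Qed.

Lemma residual_decreasing (a b : R) :
  0 <= a -> a < b -> b * exp b <= scale -> residual b < residual a.
Proof.
  intros Ha Hab Hb. pose proof scale_pos. unfold residual.
  set (r := INR (S n) / INR n).
  assert (Hr : 0 < r) by exact exponent_pos.
  assert (Hexp : exp (- (r * b)) < exp (- (r * a))) by (apply exp_increasing; nra).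
  pose proof (exp_pos (- (r * b))).
  assert (Hfactor : 0 <= 1 - b * exp b / scale < 1 - a * exp a / scale).
  { pose proof (div_scale_le_1 _ Hb).
    assert (a * exp a / scale < b * exp b / scale).
    { apply Rmult_lt_compat_r; [apply Rinv_0_lt_compat; lra | now apply mul_exp_lt]. }
    lra. }
  nra.
Qed.

Lemma residual_inj (a b : R) :
  0 <= a -> 0 <= b -> a * exp a <= scale -> b * exp b <= scale ->
  residual a = residual b -> a = b.
Proof.
  intros Ha Hb Ha' Hb' Heq.
  destruct (Rtotal_order a b) as [Hlt | [Hab | Hlt]]; [| exact Hab |].
  - pose proof (residual_decreasing _ _ Ha Hlt Hb'). lra.
  - pose proof (residual_decreasing _ _ Hb Hlt Ha'). lra.
Qed.

Lemma residual_root_exists (eta : R) :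
  0 <= eta < 1 ->
  exists w, 0 < w /\ w * exp w <= scale /\ residual w = eta.
Proof.
  intros Heta. pose proof scale_pos.
  destruct (LambertW_spec scale) as [HW0 HW]; [lra|].
  destruct (IVT_cor (fun w => residual w - eta) 0 (LambertW scale))
    as [w [[Hw0 HwW] Hw]].
  - apply continuity_minus; [exact residual_continuous | apply continuity_const; now intros ? ?].
  - exact HW0.
  - rewrite residual_0, residual_scale. nra.
  - simpl in Hw. exists w. repeat split.
    + destruct Hw0 as [|<-]; [assumption|]. rewrite residual_0 in Hw. lra.
    + rewrite <- HW. now apply mul_exp_le.
    + lra.
Qed.

Lemma xstar_LambertW (zeta : R) :
  0 < zeta ->
  xstar (S n) c zeta = exp (- LambertW (scale * zeta) / INR n) * c.
Proof.
  intros Hz. pose proof INR_n_pos. pose proof scale_pos. pose proof (pow_lt c n hc).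
  destruct (LambertW_spec (scale * zeta)) as [Hw0 Hw]; [nra|].
  set (w := LambertW (scale * zeta)) in *.
  assert (Hwpos : 0 < w).
  { destruct Hw0 as [|Hw0]; [assumption|]. rewrite <- Hw0 in Hw. nra. }
  unfold xstar. destruct (Req_EM_T zeta 0) as [|_]; [lra|].
  replace (S n - 1)%nat with n by lia.
  replace (INR n * c ^ n * zeta) with (scale * zeta) by (unfold scale; ring).
  fold w.
  (* w e^w = n c^n zeta turns the base of the power into e^(-w) c^n. *)
  assert (Hbase : w / (INR n * zeta) = exp (- w) * c ^ n).
  { rewrite exp_Ropp. pose proof (exp_pos w).
    apply Rmult_eq_reg_r with (INR n * zeta * exp w); [| apply Rgt_not_eq; apply Rmult_lt_0_compat; nra].
    field_simplify; [| lra | lra].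
    rewrite Hw. unfold scale. field. }
  rewrite Hbase. unfold Rpower.
  rewrite ln_mult, ln_exp, ln_pow by (try apply exp_pos; assumption).
  replace (/ INR n * (- w + INR n * ln c)) with (- w / INR n + ln c) by (field; lra).
  rewrite exp_plus, exp_ln by assumption. reflexivity.
Qed.

Lemma equation_residual (zeta : R) :
  0 < zeta ->
  (1 - zeta) * xstar (S n) c zeta ^ S n / c ^ S n = residual (LambertW (scale * zeta)).
Proof.
  intros Hz. pose proof INR_n_pos. pose proof scale_pos. pose proof (pow_lt c (S n) hc).
  destruct (LambertW_spec (scale * zeta)) as [_ Hw]; [nra|].
  rewrite xstar_LambertW by assumption.
  set (w := LambertW (scale * zeta)) in *.
  rewrite Rpow_mult_distr, exp_pow. unfold residual. rewrite Hw.
  replace (INR (S n) * (- w / INR n)) with (- (INR (S n) / INR n * w)) by (field; lra).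
  field. split; lra.
Qed.

Lemma equation_0 : (1 - 0) * xstar (S n) c 0 ^ S n / c ^ S n = 1.
Proof.
  unfold xstar. destruct (Req_EM_T 0 0) as [_|]; [|lra].
  pose proof (pow_lt c (S n) hc). field. lra.
Qed.

Lemma equation_solution_pos (eta zeta : R) :
  eta < 1 -> 0 <= zeta ->
  (1 - zeta) * xstar (S n) c zeta ^ S n / c ^ S n = eta -> 0 < zeta.
Proof.
  intros Heta [Hz | <-] Heq; [assumption|]. rewrite equation_0 in Heq. lra.
Qed.

Lemma scale_lt_of_lt_cbar (eta : R) :
  0 <= eta < etastar (S n) -> Rbar_lt (Finite c) (cbar (S n) eta) ->
  scale * (1 - eta / etastar (S n)) < exp 1.
Proof.
  intros Heta Hc. pose proof INR_n_pos.
  assert (Hes : 0 < etastar (S n)) by apply exp_pos.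
  assert (Hq : 0 < 1 - eta / etastar (S n)).
  { enough (eta / etastar (S n) < 1) by lra.
    apply Rmult_lt_reg_r with (etastar (S n)); [lra|]. field_simplify; lra. }
  unfold cbar in Hc. destruct (Rlt_dec eta (etastar (S n))) as [_|]; [|lra].
  simpl in Hc. replace (n - 0)%nat with n in Hc by lia.
  set (A := exp 1 / (INR n * (1 - eta / etastar (S n)))) in Hc.
  assert (HA : 0 < A) by (apply Rdiv_lt_0_compat; [apply exp_pos | nra]).
  assert (Hcn : c ^ n < A).
  { rewrite <- Rpower_pow by exact hc.
    rewrite <- (Rpower_1 A HA), <- (Rinv_l (INR n)), <- Rpower_mult by lra.
    apply Rlt_Rpower_l; [exact INR_n_pos|].
    split; [exact hc | exact Hc]. }
  unfold scale, A in *.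
  apply Rmult_lt_compat_l with (r := INR n * (1 - eta / etastar (S n))) in Hcn; [| nra].
  replace (INR n * (1 - eta / etastar (S n)) * (exp 1 / (INR n * (1 - eta / etastar (S n)))))
    with (exp 1) in Hcn by (field; lra).
  lra.
Qed.

Lemma residual_ge_1 (w zeta : R) :
  1 <= w -> w * exp w = scale * zeta -> zeta <= 1 ->
  residual w <= (1 - zeta) * etastar (S n).
Proof.
  intros Hw Hwz Hz. pose proof INR_n_pos. pose proof scale_pos.
  unfold residual. rewrite Hwz.
  replace (1 - scale * zeta / scale) with (1 - zeta) by (field; lra).
  apply Rmult_le_compat_l; [lra|].
  unfold etastar. replace (S n - 1)%nat with n by lia.
  destruct Hw as [Hw | <-]; [left; apply exp_increasing | right; f_equal; ring].
  pose proof exponent_pos. nra.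
Qed.

Lemma solution_LambertW_lt_1 (eta zeta : R) :
  0 <= eta -> 0 < zeta <= 1 -> Rbar_lt (Finite c) (cbar (S n) eta) ->
  residual (LambertW (scale * zeta)) = eta -> LambertW (scale * zeta) < 1.
Proof.
  intros Heta Hz Hc Hres. pose proof scale_pos.
  destruct (LambertW_spec (scale * zeta)) as [_ Hw]; [nra|].
  set (w := LambertW (scale * zeta)) in *.
  apply Rnot_le_lt. intros Hw1.
  pose proof (residual_ge_1 _ _ Hw1 Hw (proj2 Hz)) as Hbound.
  assert (Hes : 0 < etastar (S n)) by apply exp_pos.
  destruct (Rlt_le_dec eta (etastar (S n))) as [Hlt | Hge].
  - pose proof (scale_lt_of_lt_cbar eta (conj Heta Hlt) Hc) as HM.
    pose proof (mul_exp_le 1 w ltac:(lra) Hw1) as He. rewrite Rmult_1_l in He.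
    assert (Hz' : 1 - eta / etastar (S n) < zeta) by (apply Rmult_lt_reg_l with scale; lra).
    assert (Hquot : eta = eta / etastar (S n) * etastar (S n)) by (field; lra).
    nra.
  - nra.
Qed.

End Residual.

Theorem mainTheorem14 (k : nat) (eta c : R)
  (hk : (2 <= k)%nat) (heta0 : 0 <= eta) (heta1 : eta < 1) (hc : 0 < c) :
  (exists! zeta : R, 0 <= zeta <= 1 /\
     (1 - zeta) * xstar k c zeta ^ k / c ^ k = eta) /\
  (Rbar_lt (Finite c) (cbar k eta) ->
   forall zeta : R, 0 <= zeta <= 1 ->
     (1 - zeta) * xstar k c zeta ^ k / c ^ k = eta ->
     INR (k - 1) * zeta * c ^ (k - 1) < exp 1).
Proof.
  destruct k as [|n]; [lia|]. assert (hn : (1 <= n)%nat) by lia.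
  replace (S n - 1)%nat with n by lia.
  pose proof (scale_pos n c hn hc) as HM.
  split.
  - destruct (residual_root_exists n c hn hc eta (conj heta0 heta1)) as [w [Hw [HwM Hres]]].
    assert (Hz0 : 0 < w * exp w / scale n c) by (pose proof (exp_pos w); apply Rdiv_lt_0_compat; nra).
    exists (w * exp w / scale n c). split.
    + split; [split; [lra | now apply div_scale_le_1] |].
      rewrite equation_residual by assumption.
      replace (scale n c * (w * exp w / scale n c)) with (w * exp w) by (field; lra).
      rewrite LambertW_mul_exp by lra. exact Hres.
    + intros zeta [Hz Heq].
      pose proof (equation_solution_pos n c hc eta zeta heta1 (proj1 Hz) Heq) as Hzpos.
      rewrite equation_residual in Heq by assumption.
      destruct (LambertW_spec (scale n c * zeta)) as [Hw' Hw'e]; [nra|].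
      assert (Hsame : w = LambertW (scale n c * zeta)).
      { apply (residual_inj n c hn hc); [lra | assumption | assumption | nra | congruence]. }
      rewrite <- Hsame in Hw'e. rewrite Hw'e. field. lra.
  - intros Hc zeta Hz Heq.
    pose proof (equation_solution_pos n c hc eta zeta heta1 (proj1 Hz) Heq) as Hzpos.
    rewrite equation_residual in Heq by assumption.
    pose proof (solution_LambertW_lt_1 n c hn hc eta zeta heta0 (conj Hzpos (proj2 Hz)) Hc Heq) as Hw1.
    destruct (LambertW_spec (scale n c * zeta)) as [Hw0 Hw]; [nra|].
    replace (INR n * zeta * c ^ n) with (scale n c * zeta) by (unfold scale; ring).
    rewrite <- Hw. rewrite <- (Rmult_1_l (exp 1)). now apply mul_exp_lt.
Qed.
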